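(* Let $S$ be a lattice of finite length and let $(L_x)_{x\in S}$, $(\varphi_{yx})_{x\le y}$ be an $S$-connected system with the $L_x$ pairwise disjoint. On $U=\bigcup_{x\in S}L_x$ define $a\sim b$ (for $a\in L_x$, $b\in L_y$) iff there is $z\in S$ with $z\ge x\vee y$, $a\in\operatorname{dom}\varphi_{zx}$, $b\in\operatorname{dom}\varphi_{zy}$ and $\varphi_{zx}(a)=\varphi_{zy}(b)$. Then $\sim$ is an equivalence relation on $U$; letting $\pi:U\to U/{\sim}$ be the canonical projection, $\pi$ is injective on each $L_x$; and if $L^\pi_x:=\pi(L_x)$ is given the lattice structure making $\pi|_{L_x}:L_x\to L^\pi_x$ an isomorphism, then $(L^\pi_x)_{x\in S}$ is an $S$-glued system. Moreover, this $S$-glued system is monotone if and only if for all $x\prec y$ in $S$, $\operatorname{im}\varphi_{yx}\ne L_y$ and $\operatorname{dom}\varphi_{yx}\ne L_x$.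
   Context: Let $S$ be a lattice of finite length (every chain in $S$ is finite), with order $\le$, join $\vee$ and meet $\wedge$; $x\prec y$ means that $y$ covers $x$. A \emph{partial bijection} $\varphi$ from a set $A$ to a set $B$ is a bijection from a subset $\operatorname{dom}\varphi\subseteq A$ onto a subset $\operatorname{im}\varphi\subseteq B$ (possibly empty); composites $\psi\circ\varphi$ of partial maps are defined at $a$ iff $a\in\operatorname{dom}\varphi$ and $\varphi(a)\in\operatorname{dom}\psi$. An \emph{$S$-connected system} consists of lattices $L_x$ ($x\in S$) of finite length and partial bijections $\varphi_{yx}$ from $L_x$ to $L_y$ for all $x\le y$ in $S$ such that for all $x,y\in S$: (17) if $\varphi_{yx}\ne\emptyset$ then $\operatorname{dom}\varphi_{yx}$ is a filter of $L_x$, $\operatorname{im}\varphi_{yx}$ is an ideal of $L_y$ and $\varphi_{yx}$ is a lattice isomorphism between them; $\varphi_{xx}=\mathrm{id}_{L_x}$; (18) if $x\prec y$ then $\varphi_{yx}\ne\emptyset$; (19) for $x\le z\le y$: $\varphi_{yx}=\varphi_{yz}\circ\varphi_{zx}$; (20) $\operatorname{im}\varphi_{(x\vee y)x}\cap\operatorname{im}\varphi_{(x\vee y)y}\subseteq\operatorname{im}\varphi_{(x\vee y)(x\wedge y)}$; (20$^\delta$) $\operatorname{dom}\varphi_{x(x\wedge y)}\cap\operatorname{dom}\varphi_{y(x\wedge y)}\subseteq\operatorname{dom}\varphi_{(x\vee y)(x\wedge y)}$. An \emph{$S$-glued system} is a family $(L_x,\le_x)_{x\in S}$ of lattices of finite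 length (with least element $0_x$, greatest element $1_x$), whose underlying sets may overlap, such that for all $x,y\in S$: (1) if $x\le y$ and $L_x\cap L_y\ne\emptyset$, then $L_x\cap L_y$ is a filter of $L_x$ and an ideal of $L_y$; (2) in the situation of (1), for all $a,b\in L_x\cap L_y$: $a\le_x b$ iff $a\le_y b$; (3) if $x\prec y$ then $L_x\cap L_y\ne\emptyset$; (4) $L_x\cap L_y\subseteq L_{x\wedge y}\cap L_{x\vee y}$. The system is \emph{monotone} if for all $x\prec y$ in $S$ both $L_y\not\subseteq L_x$ and $L_x\not\subseteq L_y$. *)

From HB Require Import structures.
From Stdlib Require List.
From mathcomp Require Import all_boot all_order.
Set Implicit Arguments. Unset Strict Implicit. Unset Printing Implicit Defensive.
Import Order.Theory.
Local Open Scope order_scope.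

Section LatticeDefs.
Context {d : Order.disp_t} {T : latticeType d}.

Definition is_chain (C : T -> Prop) : Prop :=
  forall a b, C a -> C b -> (a <= b) \/ (b <= a).

Definition finite_length : Prop :=
  forall C : T -> Prop, is_chain C -> exists s : list T, forall a, C a -> List.In a s.

Definition covers (x y : T) : Prop := x < y /\ ~ (exists z, x < z /\ z < y).

Definition lfilter (F : T -> Prop) : Prop :=
  (exists a, F a) /\ (forall a b, F a -> a <= b -> F b) /\
  (forall a b, F a -> F b -> F (a `&` b)).

Definition lideal (I : T -> Prop) : Prop :=
  (exists a, I a) /\ (forall a b, I b -> a <= b -> I a) /\
  (forall a b, I a -> I b -> I (a `|` b)).
End LatticeDefs.
Arguments finite_length {d} T.

Definition pdom {A B : Type} (phi : A -> option B) (a : A) : Prop := phi a <> None.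
Definition pim {A B : Type} (phi : A -> option B) (b : B) : Prop := exists a, phi a = Some b.
Definition partial_bij {A B : Type} (phi : A -> option B) : Prop :=
  forall a a' b, phi a = Some b -> phi a' = Some b -> a = a'.

Definition plattice_iso {d1 d2 : Order.disp_t} {A : latticeType d1} {B : latticeType d2}
  (phi : A -> option B) : Prop :=
  partial_bij phi /\
  forall a a' b b', phi a = Some b -> phi a' = Some b' ->
    phi (a `&` a') = Some (b `&` b') /\ phi (a `|` a') = Some (b `|` b').

(* S-connected system; phi x y is the map written varphi_{yx} in the paper
   (from L_x to L_y), relevant only when x <= y. Lattices are nonempty. *)
Definition connected_system {d d' : Order.disp_t} {S : latticeType d}
  (L : S -> latticeType d') (phi : forall x y : S, L x -> option (L y)) : Prop :=
  (forall x, inhabited (L x)) /\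
  (forall x, finite_length (L x)) /\
  (forall x y, x <= y -> partial_bij (phi x y)) /\
  (* (17) *)
  (forall x y, x <= y -> (exists a, pdom (phi x y) a) ->
     lfilter (pdom (phi x y)) /\ lideal (pim (phi x y)) /\ plattice_iso (phi x y)) /\
  (forall x a, phi x x a = Some a) /\
  (* (18) *)
  (forall x y, covers x y -> exists a, pdom (phi x y) a) /\
  (* (19) *)
  (forall x z y, x <= z -> z <= y -> forall a, phi x y a = obind (phi z y) (phi x z a)) /\
  (* (20) *)
  (forall x y b, pim (phi x (x `|` y)) b -> pim (phi y (x `|` y)) b ->
     pim (phi (x `&` y) (x `|` y)) b) /\
  (* (20^delta) *)
  (forall x y a, pdom (phi (x `&` y) x) a -> pdom (phi (x `&` y) y) a ->
     pdom (phi (x `&` y) (x `|` y)) a).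

Definition sim {d d' : Order.disp_t} {S : latticeType d}
  {L : S -> latticeType d'} (phi : forall x y : S, L x -> option (L y))
  (u v : {x : S & L x}) : Prop :=
  exists z, projT1 u `|` projT1 v <= z /\
    exists c, phi (projT1 u) z (projT2 u) = Some c /\ phi (projT1 v) z (projT2 v) = Some c.

Definition is_equivalence_rel {U : Type} (R : U -> U -> Prop) : Prop :=
  (forall u, R u u) /\ (forall u v, R u v -> R v u) /\
  (forall u v w, R u v -> R v w -> R u w).

Section SetLattice.
Variables (V : Type) (A : V -> Prop) (le : V -> V -> Prop).

Definition is_lub (p q m : V) : Prop :=
  A m /\ le p m /\ le q m /\ forall u, A u -> le p u -> le q u -> le m u.
Definition is_glb (p q m : V) : Prop :=
  A m /\ le m p /\ le m q /\ forall u, A u -> le u p -> le u q -> le u m.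

Definition set_lattice : Prop :=
  (exists p, A p) /\
  (forall p, A p -> le p p) /\
  (forall p q, A p -> A q -> le p q -> le q p -> p = q) /\
  (forall p q r, A p -> A q -> A r -> le p q -> le q r -> le p r) /\
  (forall p q, A p -> A q -> exists m, is_lub p q m) /\
  (forall p q, A p -> A q -> exists m, is_glb p q m).

Definition set_finite_length : Prop :=
  forall C : V -> Prop, (forall p, C p -> A p) ->
    (forall p q, C p -> C q -> le p q \/ le q p) ->
    exists s : list V, forall p, C p -> List.In p s.

Definition set_filter (F : V -> Prop) : Prop :=
  (exists p, F p) /\ (forall p, F p -> A p) /\
  (forall p q, F p -> A q -> le p q -> F q) /\
  (forall p q m, F p -> F q -> is_glb p q m -> F m).

Definition set_ideal (I : V -> Prop) : Prop :=
  (exists p, I p) /\ (forall p, I p -> A p) /\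
  (forall p q, I q -> A p -> le p q -> I p) /\
  (forall p q m, I p -> I q -> is_lub p q m -> I m).
End SetLattice.

(* S-glued system: carriers A x (subsets of V) with orders le x *)
Definition glued_system {d : Order.disp_t} {S : latticeType d} {V : Type}
  (A : S -> V -> Prop) (le : S -> V -> V -> Prop) : Prop :=
  (forall x, set_lattice (A x) (le x) /\ set_finite_length (A x) (le x)) /\
  (* (1) *)
  (forall x y, x <= y -> (exists p, A x p /\ A y p) ->
     set_filter (A x) (le x) (fun p => A x p /\ A y p) /\
     set_ideal (A y) (le y) (fun p => A x p /\ A y p)) /\
  (* (2) *)
  (forall x y, x <= y -> forall p q, A x p -> A y p -> A x q -> A y q ->
     (le x p q <-> le y p q)) /\
  (* (3) *)
  (forall x y, covers x y -> exists p, A x p /\ A y p) /\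
  (* (4) *)
  (forall x y p, A x p -> A y p -> A (x `&` y) p /\ A (x `|` y) p).

Definition monotone_glued {d : Order.disp_t} {S : latticeType d} {V : Type}
  (A : S -> V -> Prop) : Prop :=
  forall x y : S, covers x y ->
    ~ (forall p, A y p -> A x p) /\ ~ (forall p, A x p -> A y p).

Definition proj_carrier {d d' : Order.disp_t} {S : latticeType d}
  {L : S -> latticeType d'} {Q : Type} (pi : {x : S & L x} -> Q) (x : S) (q : Q) : Prop :=
  exists a : L x, pi (existT _ x a) = q.

Definition proj_le {d d' : Order.disp_t} {S : latticeType d}
  {L : S -> latticeType d'} {Q : Type} (pi : {x : S & L x} -> Q) (x : S) (p q : Q) : Prop :=
  exists a b : L x, pi (existT _ x a) = p /\ pi (existT _ x b) = q /\ a <= b.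

From HB Require Import structures.
From mathcomp Require Import all_boot all_order.
From Stdlib Require Import Classical.
Import Order.Theory.
Local Open Scope order_scope.

(* Two images c1, c2 of one b in L_y under phi_{z1 y} and phi_{z2 y} both factor
   through L_{z1 meet z2}, and (20^delta) lets the common preimage travel on to
   L_{z1 join z2}; this confluence makes ~ transitive.  Restricted to a single L_x,
   ~ is equality, so pi is injective there and carries the structure of L_x over.
   For x <= y the overlap of pi(L_x) and pi(L_y) is pi(dom phi_yx) = pi(im phi_yx),
   so (1)-(3) are (17) and (18) read through pi, (4) follows from (20), and
   monotonicity says exactly that no phi_yx with y covering x is total or onto. *)

Section ConnectedSystem.
Context {d d' : Order.disp_t} {S : latticeType d} {L : S -> latticeType d'}.
Context {phi : forall x y : S, L x -> option (L y)}.
Hypothesis sys : connected_system phi.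

Lemma connected_inhabited x : inhabited (L x).
Proof. by case: sys. Qed.

Lemma connected_finite_length x : finite_length (L x).
Proof. by case: sys => _ [+ _]; apply. Qed.

Lemma connected_bij {x y} : x <= y -> partial_bij (phi x y).
Proof. by case: sys => _ [_ [+ _]]; apply. Qed.

Lemma connected_iso {x y} : x <= y -> (exists a, pdom (phi x y) a) ->
  lfilter (pdom (phi x y)) /\ lideal (pim (phi x y)) /\ plattice_iso (phi x y).
Proof. by case: sys => _ [_ [_ [+ _]]]; apply. Qed.

Lemma connected_id x (a : L x) : phi x x a = Some a.
Proof. by case: sys => _ [_ [_ [_ [+ _]]]]; apply. Qed.

Lemma connected_cover {x y} : covers x y -> exists a, pdom (phi x y) a.
Proof. by case: sys => _ [_ [_ [_ [_ [+ _]]]]]; apply. Qed.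

Lemma connected_comp {x z y} : x <= z -> z <= y ->
  forall a, phi x y a = obind (phi z y) (phi x z a).
Proof. by case: sys => _ [_ [_ [_ [_ [_ [+ _]]]]]]; apply. Qed.

Lemma connected_join_im {x y b} :
  pim (phi x (x `|` y)) b -> pim (phi y (x `|` y)) b ->
  pim (phi (x `&` y) (x `|` y)) b.
Proof. by case: sys => _ [_ [_ [_ [_ [_ [_ [+ _]]]]]]]; apply. Qed.

Lemma connected_meet_dom {x y a} :
  pdom (phi (x `&` y) x) a -> pdom (phi (x `&` y) y) a ->
  pdom (phi (x `&` y) (x `|` y)) a.
Proof. by case: sys => _ [_ [_ [_ [_ [_ [_ [_ +]]]]]]]; apply. Qed.

Lemma phi_factor {x z y a c} : x <= z -> z <= y -> phi x y a = Some c ->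
  exists2 b, phi x z a = Some b & phi z y b = Some c.
Proof.
move=> xz zy; rewrite (connected_comp xz zy).
by case: (phi x z a) => [b|] //= E; exists b.
Qed.

Lemma phi_compose {x z y a b c} : x <= z -> z <= y ->
  phi x z a = Some b -> phi z y b = Some c -> phi x y a = Some c.
Proof. by move=> xz zy Eb Ec; rewrite (connected_comp xz zy) Eb. Qed.

Lemma phi_le_iff {x y} {a a' : L x} {b b'} : x <= y ->
  phi x y a = Some b -> phi x y a' = Some b' -> (a <= a' <-> b <= b').
Proof.
move=> xy Eb Eb'.
have dom_a : pdom (phi x y) a by rewrite /pdom Eb.
have [_ [_ [bij iso]]] := connected_iso xy (ex_intro _ a dom_a).
have [Emeet _] := iso a a' b b' Eb Eb'.
split => /meet_idPl le_ab; apply/meet_idPl.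
  by move: Emeet; rewrite le_ab Eb => -[].
by move: Emeet; rewrite le_ab => Emeet; exact: bij Emeet Eb.
Qed.

Lemma phi_confluent {y z1 z2} {b : L y} {c1 c2} : y <= z1 -> y <= z2 ->
  phi y z1 b = Some c1 -> phi y z2 b = Some c2 ->
  exists e, phi z1 (z1 `|` z2) c1 = Some e /\ phi z2 (z1 `|` z2) c2 = Some e.
Proof.
move=> yz1 yz2 E1 E2.
have ym : y <= z1 `&` z2 by rewrite lexI yz1 yz2.
have [b1 Eb1 F1] := phi_factor ym (leIl _ _) E1.
have [b2 Eb2 F2] := phi_factor ym (leIr _ _) E2.
move: Eb2 F2; rewrite Eb1 => -[<-] F2.
case Ee: (phi (z1 `&` z2) (z1 `|` z2) b1) => [e|]; last first.
  by exfalso; apply: (connected_meet_dom (a := b1)); rewrite /pdom ?F1 ?F2 ?Ee.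
exists e; split.
  by move: Ee; rewrite (connected_comp (leIl _ _) (leUl _ _)) F1.
by move: Ee; rewrite (connected_comp (leIr _ _) (leUr _ _)) F2.
Qed.

Lemma sim_leE {x y} (a : L x) (b : L y) : x <= y ->
  sim phi (existT _ x a) (existT _ y b) <-> phi x y a = Some b.
Proof.
move=> xy; split=> [[z [/= xyz [c [/= Ea Eb]]]]|Eb].
  have yz : y <= z := le_trans (leUr _ _) xyz.
  have [b' -> F] := phi_factor xy yz Ea.
  by congr Some; apply: (connected_bij yz _ _ _ F Eb).
exists y; split; first by rewrite /= (join_idPr xy).
by exists b; split => //=; apply: connected_id.
Qed.

Lemma sim_refl u : sim phi u u.
Proof.
by case: u => x a; exists x; split; [rewrite /= joinxx | exists a; rewrite connected_id].
Qed.

Lemma sim_sym u v : sim phi u v -> sim phi v u.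
Proof. by move=> [z [uvz [c [Eu Ev]]]]; exists z; split; [rewrite joinC | exists c]. Qed.

Lemma sim_trans u v w : sim phi u v -> sim phi v w -> sim phi u w.
Proof.
case: u v w => [x a] [y b] [t c] [z1 [/= le1 [c1 [/= Ea Eb1]]]].
move=> [z2 [/= le2 [c2 [/= Eb2 Ec]]]].
move: le1 le2; rewrite !leUx => /andP[xz1 yz1] /andP[yz2 tz2].
have [e [F1 F2]] := phi_confluent yz1 yz2 Eb1 Eb2.
exists (z1 `|` z2); split; first by rewrite /= leU2.
exists e; split => /=.
  exact: phi_compose xz1 (leUl _ _) Ea F1.
exact: phi_compose tz2 (leUr _ _) Ec F2.
Qed.

Lemma sim_equivalence : is_equivalence_rel (sim phi).
Proof. by split; [exact: sim_refl | split; [exact: sim_sym | exact: sim_trans]]. Qed.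

Lemma sim_fiber x (a b : L x) : sim phi (existT _ x a) (existT _ x b) -> a = b.
Proof. by move/(sim_leE _ _ (lexx x)); rewrite connected_id => -[]. Qed.

Lemma sim_meet {x y} {a : L x} {b : L y} : sim phi (existT _ x a) (existT _ y b) ->
  exists e, phi (x `&` y) x e = Some a.
Proof.
move=> [z [/= xyz [c [/= Ea Eb]]]].
have [a' Ea' Fa] := phi_factor (leUl _ _) xyz Ea.
have [b' Eb' Fb] := phi_factor (leUr _ _) xyz Eb.
have eb : b' = a' := connected_bij xyz _ _ _ Fb Fa.
rewrite {}eb in Eb'.
have [e Ee] := connected_join_im (ex_intro _ a Ea') (ex_intro _ b Eb').
have [a'' Ea'' Fa''] := phi_factor (leIl _ _) (leUl _ _) Ee.
exists e; rewrite Ea''; congr Some.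
exact: connected_bij (leUl x y) _ _ _ Fa'' Ea'.
Qed.

Section Quotient.
Context {Q : Type} {cl : ({x : S & L x}) -> Q}.
Hypothesis cl_sim : forall u v, cl u = cl v <-> sim phi u v.

Local Notation P x a := (cl (existT _ x a)).
Local Notation A := (proj_carrier cl).
Local Notation le := (proj_le cl).

Lemma proj_inj x : injective (fun a : L x => P x a).
Proof. by move=> a b /cl_sim /sim_fiber. Qed.

Lemma proj_eqE {x y} (a : L x) (b : L y) : x <= y ->
  P x a = P y b <-> phi x y a = Some b.
Proof. by move=> xy; apply: iff_trans (cl_sim _ _) (sim_leE a b xy). Qed.

Lemma proj_leE x (a b : L x) : le x (P x a) (P x b) <-> a <= b.
Proof.
split=> [[a' [b' [/proj_inj -> [/proj_inj -> //]]]] | ab].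
by exists a, b.
Qed.

Lemma proj_carrier_dom {x y} (a : L x) : x <= y ->
  A y (P x a) <-> pdom (phi x y) a.
Proof.
move=> xy; split=> [[b /esym /(proj_eqE a b xy) Eb] | ]; first by rewrite /pdom Eb.
rewrite /pdom; case Eb: (phi x y a) => [b|] // _.
by exists b; symmetry; apply/(proj_eqE a b xy).
Qed.

Lemma proj_carrier_im {x y} (b : L y) : x <= y ->
  A x (P y b) <-> pim (phi x y) b.
Proof. by move=> xy; split=> [] [a /(proj_eqE a b xy)]; exists a. Qed.

Lemma proj_is_glb x (a b : L x) :
  is_glb (A x) (le x) (P x a) (P x b) (P x (a `&` b)).
Proof.
split; first by exists (a `&` b).
split; first exact/proj_leE/leIl.
split; first exact/proj_leE/leIr.
by move=> _ [c <-] /proj_leE ca /proj_leE cb; apply/proj_leE; rewrite lexI ca cb.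
Qed.

Lemma proj_is_lub x (a b : L x) :
  is_lub (A x) (le x) (P x a) (P x b) (P x (a `|` b)).
Proof.
split; first by exists (a `|` b).
split; first exact/proj_leE/leUl.
split; first exact/proj_leE/leUr.
by move=> _ [c <-] /proj_leE ac /proj_leE bc; apply/proj_leE; rewrite leUx ac bc.
Qed.

Lemma proj_glb_unique x (a b : L x) m :
  is_glb (A x) (le x) (P x a) (P x b) m -> m = P x (a `&` b).
Proof.
move=> [[c <-] [/proj_leE ca [/proj_leE cb glb]]].
have [inA [la [lb _]]] := proj_is_glb x a b.
have /proj_leE abc := glb _ inA la lb.
by rewrite (@le_anti _ _ c (a `&` b)) // lexI ca cb.
Qed.

Lemma proj_lub_unique x (a b : L x) m :
  is_lub (A x) (le x) (P x a) (P x b) m -> m = P x (a `|` b).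
Proof.
move=> [[c <-] [/proj_leE ac [/proj_leE bc lub]]].
have [inA [la [lb _]]] := proj_is_lub x a b.
have /proj_leE cab := lub _ inA la lb.
by rewrite (@le_anti _ _ c (a `|` b)) // leUx ac bc cab.
Qed.

Lemma proj_set_lattice x : set_lattice (A x) (le x).
Proof.
have [a0] := connected_inhabited x.
split; first by exists (P x a0), a0.
split; first by move=> _ [a <-]; apply/proj_leE.
split.
  move=> _ _ [a <-] [b <-] /proj_leE ab /proj_leE ba.
  by rewrite (@le_anti _ _ a b) // ab ba.
split.
  move=> _ _ _ [a <-] [b <-] [c <-] /proj_leE ab /proj_leE bc.
  by apply/proj_leE; apply: le_trans bc.
split; move=> _ _ [a <-] [b <-].
  by exists (P x (a `|` b)); apply: proj_is_lub.
by exists (P x (a `&` b)); apply: proj_is_glb.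
Qed.

Lemma proj_set_finite_length x : set_finite_length (A x) (le x).
Proof.
move=> C CA chainC.
have chain_pre : is_chain (fun a : L x => C (P x a)).
  by move=> a b /chainC /[apply] -[] /proj_leE; [left | right].
have [s in_s] := connected_finite_length x _ chain_pre.
exists (List.map (fun a : L x => P x a) s) => p Cp.
have [a Ea] := CA p Cp; subst p.
by apply: List.in_map; apply: in_s.
Qed.

Lemma proj_filter {x y} : x <= y -> (exists p, A x p /\ A y p) ->
  set_filter (A x) (le x) (fun p => A x p /\ A y p).
Proof.
move=> xy [_ [[a <-] Aya]].
have dom_a := proj1 (proj_carrier_dom a xy) Aya.
have [[_ [up meet]] _] := connected_iso xy (ex_intro _ a dom_a).
split; first by exists (P x a); split => //; exists a.
split; first by move=> p [].
split.
  move=> _ _ [[a1 <-] /(proj_carrier_dom a1 xy) d1] [a2 <-] /proj_leE le12.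
  split; first by exists a2.
  exact/(proj_carrier_dom a2 xy)/(up _ _ d1 le12).
move=> _ _ m [[a1 <-] /(proj_carrier_dom a1 xy) d1]
  [[a2 <-] /(proj_carrier_dom a2 xy) d2] /proj_glb_unique ->.
split; first by exists (a1 `&` a2).
exact/(proj_carrier_dom _ xy)/meet.
Qed.

Lemma proj_ideal {x y} : x <= y -> (exists p, A x p /\ A y p) ->
  set_ideal (A y) (le y) (fun p => A x p /\ A y p).
Proof.
move=> xy [_ [[a <-] Aya]].
have dom_a := proj1 (proj_carrier_dom a xy) Aya.
have [_ [[_ [down join]] _]] := connected_iso xy (ex_intro _ a dom_a).
split; first by exists (P x a); split => //; exists a.
split; first by move=> p [].
split.
  move=> p q [Axq [b2 Eq]] [b1 Ep]; subst p q.
  move: Axq => /(proj_carrier_im _ xy) im2 /proj_leE le12.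
  split; last by exists b1.
  exact/(proj_carrier_im b1 xy)/(down _ _ im2 le12).
move=> p q m [Axp [b1 Ep]] [Axq [b2 Eq]]; subst p q.
move: Axp Axq => /(proj_carrier_im _ xy) im1 /(proj_carrier_im _ xy) im2.
move/proj_lub_unique ->.
split; last by exists (b1 `|` b2).
exact/(proj_carrier_im _ xy)/join.
Qed.

Lemma proj_le_agree {x y} : x <= y -> forall p q,
  A x p -> A y p -> A x q -> A y q -> (le x p q <-> le y p q).
Proof.
move=> xy _ _ [a <-] [b Eb] [a' <-] [b' Eb'].
rewrite proj_leE -Eb -Eb' proj_leE.
move/esym: Eb => /(proj_eqE _ _ xy) Eb; move/esym: Eb' => /(proj_eqE _ _ xy) Eb'.
exact: phi_le_iff xy Eb Eb'.
Qed.

Lemma proj_cover x y : covers x y -> exists p, A x p /\ A y p.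
Proof.
move=> cxy; have xy : x <= y by case: cxy => /ltW.
have [a dom_a] := connected_cover cxy.
by exists (P x a); split; [exists a | apply/(proj_carrier_dom a xy)].
Qed.

Lemma proj_meet_join x y p : A x p -> A y p -> A (x `&` y) p /\ A (x `|` y) p.
Proof.
move=> [a <-] [b /cl_sim /sim_sym sab].
split.
  have [e Ee] := sim_meet sab.
  by exists e; apply/(proj_eqE e a (leIl x y)).
move: sab => [z [/= xyz [c [/= Ea _]]]].
have [c' Ec' _] := phi_factor (leUl _ _) xyz Ea.
by apply/(proj_carrier_dom a (leUl x y)); rewrite /pdom Ec'.
Qed.

Lemma proj_glued_system : glued_system A le.
Proof.
split.
  by move=> x; split; [apply: proj_set_lattice | apply: proj_set_finite_length].
split; first by move=> x y xy common; split; [apply: proj_filter | apply: proj_ideal].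
split; first by move=> x y; apply: proj_le_agree.
split; [exact: proj_cover | exact: proj_meet_join].
Qed.

Lemma proj_carrier_subset_im {x y} : x <= y ->
  (forall p, A y p -> A x p) <-> (forall b, pim (phi x y) b).
Proof.
move=> xy; split=> [sub b | im _ [b <-]]; apply/(proj_carrier_im b xy).
  by apply: sub; exists b.
exact: im.
Qed.

Lemma proj_carrier_subset_dom {x y} : x <= y ->
  (forall p, A x p -> A y p) <-> (forall a, pdom (phi x y) a).
Proof.
move=> xy; split=> [sub a | dom _ [a <-]]; apply/(proj_carrier_dom a xy).
  by apply: sub; exists a.
exact: dom.
Qed.

Lemma proj_monotoneE : monotone_glued A <->
  forall x y, covers x y ->
    (exists b, ~ pim (phi x y) b) /\ (exists a, ~ pdom (phi x y) a).
Proof.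
split=> mono x y cxy; have xy : x <= y by case: cxy => /ltW.
  have [nsub_yx nsub_xy] := mono x y cxy.
  split; apply: not_all_ex_not => all.
    by apply: nsub_yx; apply/(proj_carrier_subset_im xy).
  by apply: nsub_xy; apply/(proj_carrier_subset_dom xy).
have [[b nb] [a na]] := mono x y cxy.
split=> [/(proj_carrier_subset_im xy) im | /(proj_carrier_subset_dom xy) dom].
  exact: nb (im b).
exact: na (dom a).
Qed.

End Quotient.
End ConnectedSystem.

Theorem theorem4p2 (d d' : Order.disp_t) (S : latticeType d)
  (L : S -> latticeType d') (phi : forall x y : S, L x -> option (L y)) :
  finite_length S ->
  connected_system phi ->
  is_equivalence_rel (sim phi) /\
  forall (Q : Type) (pi : {x : S & L x} -> Q),
    (forall q, exists u, pi u = q) ->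
    (forall u v, pi u = pi v <-> sim phi u v) ->
    (forall x : S, injective (fun a : L x => pi (existT _ x a))) /\
    glued_system (proj_carrier pi) (proj_le pi) /\
    (monotone_glued (proj_carrier pi) <->
     forall x y : S, covers x y ->
       (exists b, ~ pim (phi x y) b) /\ (exists a, ~ pdom (phi x y) a)).
Proof.
move=> _ sys; split; first exact: sim_equivalence.
move=> Q pi _ pi_sim.
split; first exact: (proj_inj sys pi_sim).
by split; [apply: (proj_glued_system sys pi_sim) | apply: (proj_monotoneE sys pi_sim)].
Qed.
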